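(* Let $(\mathfrak{g},[\cdot,\cdot]_{\mathfrak{g}},\phi_{\mathfrak{g}})$ be a Hom-Lie algebra, $(V,\beta,\rho)$ a weakly involutive representation of it ($V$ finite-dimensional), and $T:V\to\mathfrak g$ a linear map satisfying $T\beta=\phi_{\mathfrak g}T$. If $T$ is an $\mathcal O$-operator associated to $(V,\beta,\rho)$, then $r=\overline T-\sigma(\overline T)$ is a solution of the classical Hom-Yang-Baxter equation $[r,r]=0$ in the Hom-Lie algebra $\mathfrak g\ltimes_{\rho^\circ}V^*$.
   Context: A Hom-Lie algebra $(\mathfrak{h},[\cdot,\cdot]_{\mathfrak{h}},\phi_{\mathfrak{h}})$: skew-symmetric bilinear bracket and linear map with $\phi_{\mathfrak h}[x,y]=[\phi_{\mathfrak h}x,\phi_{\mathfrak h}y]$ and $[\phi_{\mathfrak h}(x),[y,z]]+[\phi_{\mathfrak h}(y),[z,x]]+[\phi_{\mathfrak h}(z),[x,y]]=0$. A representation $(V,\beta,\rho)$ of $\mathfrak g$: $\beta\in\mathfrak{gl}(V)$, $\rho:\mathfrak g\to\mathfrak{gl}(V)$ linear with $\rho(\phi_{\mathfrak g}(x))\beta=\beta\rho(x)$ and $\rho([x,y]_{\mathfrak g})\beta=\rho(\phi_{\mathfrak g}(x))\rho(y)-\rho(\phi_{\mathfrak g}(y))\rho(x)$; it is weakly involutive if $\rho(\phi_{\mathfrak g}^2(x))=\rho(x)$ for all $x$. Define $\rho^\circ:\mathfrak g\to\mathfrak{gl}(V^* )$ by $\langle\rho^\circ(x)\xi,v\rangle=-\langle\xi,\rho(\phi_{\mathfrak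 g}(x))v\rangle$; when $\rho$ is weakly involutive, $(V^*,\beta^*,\rho^\circ)$ is a representation. The semidirect product $\mathfrak g\ltimes_{\rho^\circ}V^*$ is $\mathfrak g\oplus V^*$ with bracket $[(x,\xi),(y,\eta)]=([x,y]_{\mathfrak g},\rho^\circ(x)\eta-\rho^\circ(y)\xi)$ and twisting map $\phi_{\mathfrak g}\oplus\beta^*$. An $\mathcal O$-operator associated to $(V,\beta,\rho)$ is a linear map $T:V\to\mathfrak g$ with $T\beta=\phi_{\mathfrak g}T$ and $[T(u),T(v)]_{\mathfrak g}=T(\rho(T(u))v-\rho(T(v))u)$ for all $u,v\in V$. With $\{v_i\}$ a basis of $V$ and $\{v^i\}$ the dual basis, $\overline T=\sum_iv^i\otimes T(v_i)\in(\mathfrak g\oplus V^* )^{\otimes2}$, and $\sigma$ is the flip of tensor factors. For a Hom-Lie algebra $(\mathfrak h,[\cdot,\cdot],\phi)$ and $r=\sum_ix_i\otimes y_i\in\mathfrak h\otimes\mathfrak h$, $[r,r]=\sum_{i,j}\big([x_i,x_j]\otimes\phi(y_i)\otimes\phi(y_j)+\phi(x_i)\otimes[y_i,x_j]\otimes\phi(y_j)+\phi(x_i)\otimes\phi(x_j)\otimes[y_i,y_j]\big)$; the classical Hom-Yang-Baxter equation is $[r,r]=0$. *)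

From HB Require Import structures.
From mathcomp Require Import all_boot all_order all_algebra.
Set Implicit Arguments. Unset Strict Implicit. Unset Printing Implicit Defensive.
Import GRing.Theory.
Local Open Scope ring_scope.

Section HomLie.
Variable K : fieldType.

Definition is_HomLie (g : lmodType K) (br : g -> g -> g) (phi : g -> g) : Prop :=
  [/\ (forall (a : K) (x y z : g), br (a *: x + y) z = a *: br x z + br y z),
      (forall x y : g, br x y = - br y x),
      (forall (a : K) (x y : g), phi (a *: x + y) = a *: phi x + phi y),
      (forall x y : g, phi (br x y) = br (phi x) (phi y)) &
      (forall x y z : g,
         br (phi x) (br y z) + br (phi y) (br z x) + br (phi z) (br x y) = 0)].

Definition is_HomLie_rep (g : lmodType K) (br : g -> g -> g) (phi : g -> g)
    (V : vectType K) (beta : 'End(V)) (rho : g -> 'End(V)) : Prop :=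
  [/\ (forall (a : K) (x y : g), rho (a *: x + y) = a *: rho x + rho y),
      (forall x : g, (rho (phi x) \o beta = beta \o rho x)%VF) &
      (forall x y : g,
         (rho (br x y) \o beta = rho (phi x) \o rho y - rho (phi y) \o rho x)%VF)].

Definition weakly_involutive (g : lmodType K) (phi : g -> g)
    (V : vectType K) (rho : g -> 'End(V)) : Prop :=
  forall x : g, rho (phi (phi x)) = rho x.

Definition dualV (V : vectType K) := 'Hom(V, K^o).

Definition dual_map (V : vectType K) (beta : 'End(V)) (xi : dualV V) : dualV V :=
  (xi \o beta)%VF.

Definition rho_circ (g : lmodType K) (phi : g -> g) (V : vectType K)
    (rho : g -> 'End(V)) (x : g) (xi : dualV V) : dualV V :=
  - (xi \o rho (phi x))%VF.

Definition sd_br (g : lmodType K) (br : g -> g -> g) (phi : g -> g)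
    (V : vectType K) (rho : g -> 'End(V))
    (u w : (g * dualV V)%type) : (g * dualV V)%type :=
  (br u.1 w.1, rho_circ phi rho u.1 w.2 - rho_circ phi rho w.1 u.2).

Definition sd_phi (g : lmodType K) (phi : g -> g) (V : vectType K) (beta : 'End(V))
    (u : (g * dualV V)%type) : (g * dualV V)%type :=
  (phi u.1, dual_map beta u.2).

Definition is_O_operator (g : lmodType K) (br : g -> g -> g) (phi : g -> g)
    (V : vectType K) (beta : 'End(V)) (rho : g -> 'End(V)) (T : V -> g) : Prop :=
  [/\ (forall (a : K) (u v : V), T (a *: u + v) = a *: T u + T v),
      (forall v : V, T (beta v) = phi (T v)) &
      (forall u v : V, br (T u) (T v) = T (rho (T u) v - rho (T v) u))].

(* An element sum_k a_k (x) b_k of h (x) h is represented by the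
   list of its pure terms [:: (a_k, b_k)]; similarly for h (x) h (x) h.
   A 3-tensor is zero iff it is annihilated by every f1 (x) f2 (x) f3 with
   f_i linear functionals on h (canonical injective map into trilinear forms
   on h^*, valid for vector spaces over a field). *)
Definition tensor3_zero (h : lmodType K) (t : seq (h * h * h)) : Prop :=
  forall f1 f2 f3 : {linear h -> K^o},
    \sum_(u <- t) ((f1 u.1.1 : K) * (f2 u.1.2 : K) * (f3 u.2 : K)) = 0.

Definition hom_YB_bracket (h : Type) (br : h -> h -> h) (phi : h -> h)
    (r : seq (h * h)) : seq (h * h * h) :=
  flatten [seq [:: (br p.1 q.1, phi p.2, phi q.2);
                   (phi p.1, br p.2 q.1, phi q.2);
                   (phi p.1, phi q.1, br p.2 q.2)] | p <- r, q <- r].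

Definition dual_basis (V : vectType K) (n : nat) (e : n.-tuple V) (i : 'I_n)
    : dualV V := linfun (fun v : V => (coord e i v : K^o)).

(* r = Tbar - sigma(Tbar), Tbar = sum_i v^i (x) T(v_i), as a list of pure
   tensors in (g \oplus V^* ) (x) (g \oplus V^* );  - (T v_i (x) v^i) is
   written (- T v_i) (x) v^i. *)
Definition r_of_T (g : lmodType K) (V : vectType K) (n : nat) (e : n.-tuple V)
    (T : V -> g) : seq ((g * dualV V) * (g * dualV V)) :=
  [seq ((0, dual_basis e i), (T e`_i, 0)) | i : 'I_n] ++
  [seq ((- T e`_i, 0), (0, dual_basis e i)) | i : 'I_n].

End HomLie.

From HB Require Import structures.
From mathcomp Require Import all_boot all_order all_algebra.
From mathcomp Require Import ring.
Set Implicit Arguments. Unset Strict Implicit.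
Import GRing.Theory.
Local Open Scope ring_scope.

(* A linear form on g (+) V^* is (x, xi) |-> L x + xi w for a linear form L on g and a
   vector w of V, V being finite-dimensional; so it suffices to evaluate [r, r] against
   products of three such forms.  The basic computation is that contracting
   r = sum_i v^i (x) T v_i - T v_i (x) v^i against (L, w) (x) (M, u) gives M (T w) - L (T u).
   Summing the terms of [r, r] first over the second and then over the first copy of r
   leaves an expression in T, rho and the bracket which, after Tbeta = phiT,
   rho phi^2 = rho and phi [x, y] = [phi x, phi y], cancels by the O-operator identity
   [T u, T v] = T (rho (T u) v - rho (T v) u). *)

Lemma sum_hom_YB_bracket (h : Type) (M : nmodType) (br : h -> h -> h) (phi : h -> h)
    (r : seq (h * h)) (G : h * h * h -> M) :
  \sum_(u <- hom_YB_bracket br phi r) G u =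
  \sum_(p <- r) \sum_(q <- r) (G (br p.1 q.1, phi p.2, phi q.2)
     + G (phi p.1, br p.2 q.1, phi q.2) + G (phi p.1, phi q.1, br p.2 q.2)).
Proof.
rewrite big_flatten /= big_allpairs_dep.
by apply: eq_bigr => p _; apply: eq_bigr => q _; rewrite !big_cons big_nil addr0 addrA.
Qed.

Lemma skew_bilinear (K : fieldType) (g : lmodType K) (br : g -> g -> g) :
  (forall z, linear (br^~ z)) -> (forall x y, br x y = - br y x) ->
  bilinear_for *:%R *:%R br.
Proof.
move=> br_linearl br_skew; split=> // z a x y.
by rewrite br_skew br_linearl opprD -scalerN -!br_skew.
Qed.

Section DualBasis.
Variables (K : fieldType) (V : vectType K) (n : nat) (e : n.-tuple V).
Hypothesis e_basis : basis_of fullv e.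

Lemma dual_basisE i v : dual_basis e i v = coord e i v.
Proof. by rewrite lfunE. Qed.

(* Linearity of dual vectors with the arithmetic of K rather than K^o, which ring needs. *)
Lemma dual_scalar (xi : dualV V) : scalar xi.
Proof. by move=> a u v; rewrite linearP. Qed.

Lemma dual_oppE (xi : dualV V) v : xi (- v) = - xi v :> K.
Proof. by rewrite raddfN. Qed.

Lemma dual_subE (xi : dualV V) u v : xi (u - v) = xi u - xi v :> K.
Proof. by rewrite raddfB. Qed.

Lemma scalar_coord_sum {c : V -> K} (c_scalar : scalar c) u :
  \sum_(i < n) coord e i u * c e`_i = c u.
Proof.
pose cL : {scalar V} := HB.pack c (GRing.isLinear.Build _ _ _ _ c c_scalar).
rewrite -[c]/(cL : V -> K) {2}(coord_basis e_basis (memvf u)) linear_sum.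
by apply: eq_bigr => i _; rewrite linearZ.
Qed.

Lemma dual_basis_expansion (xi : dualV V) : xi = \sum_(i < n) xi e`_i *: dual_basis e i.
Proof.
apply/lfunP => v; rewrite sum_lfunE -(scalar_coord_sum (dual_scalar xi) v).
by apply: eq_bigr => i _; rewrite scale_lfunE dual_basisE mulrC.
Qed.

Section LinearFormsOnProduct.
Variable g : lmodType K.

Definition pair_form (L : g -> K) (w : V) (p : g * dualV V) : K := L p.1 + p.2 w.

Variable f : {linear (g * dualV V)%type -> K^o}.

Lemma scalar_lfun_inl : scalar (fun x => f (x, 0)).
Proof.
move=> a x y; rewrite -[RHS]/(a *: f (x, 0) + f (y, 0)) -linearP.
by congr (f _); rewrite -[RHS]/(a *: x + y, a *: 0 + 0) scaler0 addr0.
Qed.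

Lemma scalar_lfun_inr : scalar (fun xi => f (0, xi)).
Proof.
move=> a xi xi'; rewrite -[RHS]/(a *: f (0, xi) + f (0, xi')) -linearP.
by congr (f _); rewrite -[RHS]/(a *: 0 + 0, a *: xi + xi') scaler0 addr0.
Qed.

Lemma lfun_pair_formE :
  f =1 pair_form (fun x => f (x, 0)) (\sum_(i < n) f (0, dual_basis e i) *: e`_i).
Proof.
move=> [x xi]; rewrite /pair_form /=.
have -> : (x, xi) = (x, 0) + (0, xi) :> (g * dualV V)%type
  by rewrite -[RHS]/(x + 0, 0 + xi) addr0 add0r.
rewrite raddfD; congr (_ + _).
pose f0 : {scalar dualV V} := HB.pack (fun xi => f (0, xi))
  (GRing.isLinear.Build _ _ _ _ _ scalar_lfun_inr).
rewrite -[LHS]/(f0 xi) {1}(dual_basis_expansion xi) !linear_sum.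
by apply: eq_bigr => i _; rewrite !linearZ /=; exact: mulrC.
Qed.

End LinearFormsOnProduct.
End DualBasis.

Section SemidirectForms.
Variables (K : fieldType) (g : lmodType K) (V : vectType K).
Variables (br : g -> g -> g) (phi : g -> g) (beta : 'End(V)) (rho : g -> 'End(V)).

Lemma pair_form_sd_phi (L : g -> K) w p :
  pair_form L w (sd_phi phi beta p) = pair_form (L \o phi) (beta w) p.
Proof. by rewrite /pair_form /= /dual_map comp_lfunE. Qed.

Lemma pair_form_sd_br (L : g -> K) w p q :
  pair_form L w (sd_br br phi rho p q)
  = pair_form (fun y => L (br p.1 y) + p.2 (rho (phi y) w)) (- rho (phi p.1) w) q.
Proof.
rewrite /pair_form /= /rho_circ add_lfunE !opp_lfunE !comp_lfunE opprK raddfN.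
by rewrite addrA addrAC.
Qed.

End SemidirectForms.

Section ContractionWithR.
Variables (K : fieldType) (g : lmodType K) (V : vectType K) (n : nat) (e : n.-tuple V).
Hypothesis e_basis : basis_of fullv e.
Variable T : V -> g.
Hypothesis T_linear : linear T.
HB.instance Definition _ := GRing.isLinear.Build K V g _ T T_linear.
Variables (L M : g -> K).
Hypotheses (L_scalar : scalar L) (M_scalar : scalar M).
HB.instance Definition _ := GRing.isLinear.Build K g K _ L L_scalar.
HB.instance Definition _ := GRing.isLinear.Build K g K _ M M_scalar.

Lemma sum_r_of_T_pair_form w u :
  \sum_(q <- r_of_T e T) pair_form L w q.1 * pair_form M u q.2 = M (T w) - L (T u).
Proof.
have scalar_comp_T (N : {scalar g}) : scalar (N \o T) by move=> a x y; rewrite /= !linearP.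
rewrite /r_of_T big_cat !big_map /= /pair_form /=.
rewrite -[M (T w)](scalar_coord_sum e_basis (scalar_comp_T M)).
rewrite -[L (T u)](scalar_coord_sum e_basis (scalar_comp_T L)) -sumrN.
by congr (_ + _); apply: eq_bigr => i _; rewrite !lfunE /= !raddf0 ?raddfN; ring.
Qed.

End ContractionWithR.

Section HomYangBaxter.
Variables (K : fieldType) (g : lmodType K) (V : vectType K) (n : nat) (e : n.-tuple V).
Hypothesis e_basis : basis_of fullv e.
Variables (br : g -> g -> g) (phi : g -> g) (beta : 'End(V)) (rho : g -> 'End(V)) (T : V -> g).
Hypothesis br_bilinear : bilinear_for *:%R *:%R br.
Hypotheses (phi_linear : linear phi) (rho_linear : linear rho) (T_linear : linear T).
HB.instance Definition _ := bilinear_isBilinear.Build K g g g *:%R *:%R br br_bilinear.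
HB.instance Definition _ := GRing.isLinear.Build K g g _ phi phi_linear.
HB.instance Definition _ := GRing.isLinear.Build K g 'End(V) _ rho rho_linear.
HB.instance Definition _ := GRing.isLinear.Build K V g _ T T_linear.
Hypothesis phi_br : forall x y, phi (br x y) = br (phi x) (phi y).
Hypothesis rho_phi2 : forall x, rho (phi (phi x)) = rho x.
Hypothesis T_beta : forall v, T (beta v) = phi (T v).
Hypothesis T_br : forall u v, br (T u) (T v) = T (rho (T u) v - rho (T v) u).

Lemma scalar_phi_comp (F : {scalar g}) : scalar (F \o phi).
Proof. by move=> a x y; rewrite /= !linearP. Qed.

Lemma scalar_sd_br_form (F : {scalar g}) x (xi : dualV V) w :
  scalar (fun y => F (br x y) + xi (rho (phi y) w)).
Proof.
by move=> a y z; rewrite linearPr !linearP add_lfunE scale_lfunE dual_scalar /=; ring.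
Qed.

Variables (F1 F2 F3 : g -> K) (w1 w2 w3 : V).
Hypotheses (F1_scalar : scalar F1) (F2_scalar : scalar F2) (F3_scalar : scalar F3).
HB.instance Definition _ := GRing.isLinear.Build K g K _ F1 F1_scalar.
HB.instance Definition _ := GRing.isLinear.Build K g K _ F2 F2_scalar.
HB.instance Definition _ := GRing.isLinear.Build K g K _ F3 F3_scalar.

Local Notation r := (r_of_T e T).
Local Notation h := (g * dualV V)%type.

Let tensor_form (u : h * h * h) : K :=
  pair_form F1 w1 u.1.1 * pair_form F2 w2 u.1.2 * pair_form F3 w3 u.2.

Let twist (F : g -> K) (w : V) (y : g) : K := F (phi (T (rho (phi y) w))).

Let form_l (y : g) : K := - (twist F3 w1 y + F1 (br y (phi (T w3)))).
Let vec_l : V := - rho (T w3) w1.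
Let form_r (y : g) : K :=
  F3 (br y (phi (T w2))) - F2 (br y (phi (T w3))) + twist F2 w3 y - twist F3 w2 y.
Let vec_r : V := rho (T w2) w3 - rho (T w3) w2.

Local Notation sdbr := (sd_br br phi rho).
Local Notation sdphi := (sd_phi phi beta).

Lemma sum_r_hom_YB_terms (p : h * h) :
  \sum_(q <- r) (tensor_form (sdbr p.1 q.1, sdphi p.2, sdphi q.2)
     + tensor_form (sdphi p.1, sdbr p.2 q.1, sdphi q.2)
     + tensor_form (sdphi p.1, sdphi q.1, sdbr p.2 q.2))
  = pair_form form_l vec_l p.1 * pair_form (F2 \o phi) (beta w2) p.2
  + pair_form (F1 \o phi) (beta w1) p.1 * pair_form form_r vec_r p.2.
Proof.
under eq_bigr => q _ do rewrite /tensor_form /= !pair_form_sd_phi !pair_form_sd_br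
  -!mulrA [X in X + _ + _]mulrCA.
rewrite !big_split /= -!mulr_sumr !(sum_r_of_T_pair_form e_basis T_linear);
  try by [exact: scalar_phi_comp | exact: scalar_sd_br_form].
rewrite /pair_form /form_l /vec_l /form_r /vec_r /twist /= !T_beta !rho_phi2.
by rewrite !dual_oppE dual_subE !raddfN /=; ring.
Qed.

Lemma scalar_form_l : scalar form_l.
Proof.
by move=> a x y; rewrite /form_l /twist !(linearPl, linearP, add_lfunE, scale_lfunE) /=; ring.
Qed.

Lemma scalar_form_r : scalar form_r.
Proof.
by move=> a x y; rewrite /form_r /twist !(linearPl, linearP, add_lfunE, scale_lfunE) /=; ring.
Qed.

Lemma pair_forms_hom_YB_bracket_r_eq0 :
  \sum_(u <- hom_YB_bracket sdbr sdphi r) tensor_form u = 0.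
Proof.
rewrite sum_hom_YB_bracket.
under eq_bigr => p _ do rewrite sum_r_hom_YB_terms.
rewrite big_split /= !(sum_r_of_T_pair_form e_basis T_linear);
  try by [exact: scalar_phi_comp | exact: scalar_form_l | exact: scalar_form_r].
rewrite /form_l /form_r /vec_l /vec_r /twist /= !T_beta !rho_phi2 -!phi_br !T_br.
by rewrite !raddfN !raddfB /=; ring.
Qed.

End HomYangBaxter.

Theorem theorem5p8 (K : fieldType) (g : lmodType K) (br : g -> g -> g)
    (phi : g -> g) (V : vectType K) (beta : 'End(V)) (rho : g -> 'End(V))
    (T : V -> g) (n : nat) (e : n.-tuple V) :
  is_HomLie br phi ->
  is_HomLie_rep br phi beta rho ->
  weakly_involutive phi rho ->
  (forall (a : K) (u v : V), T (a *: u + v) = a *: T u + T v) ->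
  (forall v : V, T (beta v) = phi (T v)) ->
  basis_of fullv e ->
  is_O_operator br phi beta rho T ->
  tensor3_zero
    (hom_YB_bracket (sd_br br phi rho) (sd_phi phi beta) (r_of_T e T)).
Proof.
move=> [br_linearl br_skew phi_linear phi_br _] [rho_linear _ _] rho_phi2 T_linear T_beta
  e_basis [_ _ T_br] f1 f2 f3.
under eq_bigr do rewrite !(lfun_pair_formE e_basis).
have br_bilinear := skew_bilinear (fun z a x y => br_linearl a x y z) br_skew.
exact: (pair_forms_hom_YB_bracket_r_eq0 e_basis br_bilinear phi_linear rho_linear T_linear
  phi_br rho_phi2 T_beta T_br _ _ _
  (scalar_lfun_inl f1) (scalar_lfun_inl f2) (scalar_lfun_inl f3)).
Qed.
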